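(* Let $K$ be a cubical complex with $H^1(K;\mathbb{Z}/2\mathbb{Z})=0$. Then $K$ has a bicoloring.
   Context: A cubical poset is a poset $P$ in which every order ideal $\{z\in P: z\le x\}$ is isomorphic to a product of copies of $I$, where $I$ is the three-element face poset of an interval with the empty face excluded (two incomparable endpoints below a single maximum). A cubical complex is a (regular) cell complex whose face poset $P$ (excluding the empty face) is a cubical poset such that $P$ with a minimum and a maximum element adjoined is a lattice. A bicoloring of a complex is an assignment of one of two colors to each vertex such that every edge has one endpoint of each color (i.e., the 1-skeleton is bipartite with respect to the coloring). *)

From HB Require Import structures.
From mathcomp Require Import all_boot all_order.
Set Implicit Arguments. Unset Strict Implicit. Unset Printing Implicit Defensive.
Import Order.Theory.
Local Open Scope order_scope.

(* The three-element poset I: [Some b] are the two endpoints, [None] the maximum. *)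
Definition leI (a b : option bool) : bool := (a == b) || (b == None).

Definition cube (n : nat) := {ffun 'I_n -> option bool}.
Definition lecube (n : nat) (a b : cube n) : bool := [forall i, leI (a i) (b i)].

Section Cubical.
Context {d : Order.disp_t} {P : finPOrderType d}.

(* [cell_dim x n]: the order ideal {z | z <= x} is isomorphic (as a poset) to I^n. *)
Definition cell_dim (x : P) (n : nat) : bool :=
  [exists f : {ffun cube n -> P},
    [&& injectiveb f,
        [forall a : cube n, forall b : cube n, lecube a b == (f a <= f b)]
      & [forall z : P, (z <= x) == (z \in codom f)]]].

Definition cubical_poset : Prop := forall x : P, exists n, cell_dim x n.

Inductive hat := Bot | Elt of P | Top.
Definition leh (a b : hat) : Prop :=
  match a, b with
  | Bot, _ => True
  | _, Top => True
  | Elt x, Elt y => x <= y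
  | _, _ => False
  end.
Definition hat_is_lattice : Prop :=
  forall a b : hat,
    (exists j, [/\ leh a j, leh b j & forall c, leh a c -> leh b c -> leh j c]) /\
    (exists m, [/\ leh m a, leh m b & forall c, leh c a -> leh c b -> leh c m]).

(* Face poset of a (finite, regular) cubical complex. *)
Definition cubical_complex : Prop := cubical_poset /\ hat_is_lattice.

(* Cellular cochains with Z/2 coefficients (Z/2 = bool with xor).  For a regular
   cell complex the incidence number [s : t] is +-1 exactly when t is a facet of s,
   so mod 2 the coboundary of a k-cochain f at a (k+1)-cell s is the sum of f
   over the k-dimensional faces of s. *)
Definition coboundary (k : nat) (f : P -> bool) (s : P) : bool :=
  \big[addb/false]_(t | (t < s) && cell_dim t k) f t.

Definition H1_Z2_trivial : Prop :=
  forall f : P -> bool,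
    (forall s, cell_dim s 2 -> coboundary 1 f s = false) ->
    exists g : P -> bool, forall e, cell_dim e 1 -> f e = coboundary 0 g e.

Definition bicoloring (c : P -> bool) : Prop :=
  forall e u v : P, cell_dim e 1 -> cell_dim u 0 -> cell_dim v 0 ->
    u < e -> v < e -> u != v -> c u != c v.

End Cubical.

(* The constant 1-cochain [fun=> true] is a cocycle, because every square has
   four edges.  As H^1(K; Z/2) = 0 it is the coboundary of a 0-cochain g, so
   g u + g v = 1 for the two endpoints u, v of every edge: g is a bicoloring.
   The face counts come from the isomorphism between I^n and the ideal below an
   n-cell: its k-faces are the points of I^n with exactly k coordinates at the
   top of I, of which there are C(n, k) 2^(n-k). *)

From mathcomp Require Import all_boot all_order.
Set Implicit Arguments. Unset Strict Implicit. Unset Printing Implicit Defensive.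
Import Order.Theory.

Lemma card_leI (y : option bool) : #|[pred x | leI x y]| = if y is None then 3 else 1.
Proof.
case: y => [b|].
  by rewrite -(card1 (Some b)); apply: eq_card => x; rewrite !inE /leI; case: x.
transitivity #|{: option bool}|; last by rewrite card_option card_bool.
by apply: eq_card => x; rewrite !inE /leI orbT.
Qed.

Definition cube_top n : cube n := [ffun _ => None].

Definition cube_support n (a : cube n) : {set 'I_n} := [set i | a i == None].
Definition cube_dim n (a : cube n) : nat := #|cube_support a|.

Lemma card_family_prod (aT rT : finType) (F : aT -> pred rT) :
  #|(family F : simpl_pred {ffun aT -> rT})| = \prod_i #|F i|.
Proof. by rewrite card_family foldrE big_map big_enum. Qed.

Lemma card_lecube n (a : cube n) : #|[pred b | lecube b a]| = 3 ^ cube_dim a.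
Proof.
rewrite -prod_nat_const big_mkcond.
rewrite -[LHS](@eq_card _ (family (fun i => [pred x | leI x (a i)]))); last first.
  by move=> b; rewrite !inE.
rewrite card_family_prod; apply: eq_bigr => i _; rewrite card_leI inE.
by case: (a i).
Qed.

Lemma card_cube_support n (S : {set 'I_n}) :
  #|[pred a : cube n | cube_support a == S]| = 2 ^ (n - #|S|).
Proof.
rewrite -(@eq_card _ (family (fun i => [pred x | (x == None) == (i \in S)]))); last first.
  move=> a; rewrite !inE; apply/forallP/eqP => [supp_a | <- i].
    by apply/setP => i; have := supp_a i; rewrite !inE => /eqP.
  by rewrite !inE.
have -> : n - #|S| = #|~: S| by rewrite -[n in n - _](card_ord n) -(cardsC S) addKn.
rewrite card_family_prod -prod_nat_const.
rewrite [RHS]big_mkcond; apply: eq_bigr => i _; rewrite inE.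
case: (i \in S).
  by rewrite -(card1 (None : option bool)); apply: eq_card => x; rewrite !inE eqb_id.
transitivity #|predC1 (None : option bool)|; last by rewrite cardC1 card_option card_bool.
by apply: eq_card => x; rewrite !inE eqbF_neg.
Qed.

Lemma card_cube_dim n k : #|[pred a : cube n | cube_dim a == k]| = 'C(n, k) * 2 ^ (n - k).
Proof.
rewrite -sum1_card (partition_big (@cube_support n) [pred S : {set 'I_n} | #|S| == k]) //=.
rewrite -[n in 'C(n, _)](card_ord n) -card_draws -sum_nat_const.
apply: eq_big => [S | S /eqP <-]; first by rewrite inE.
rewrite sum1_card -card_cube_support; apply: eq_card => a.
by rewrite unfold_in inE andb_idl // => /eqP <-.
Qed.

Lemma cube_dim_top n : cube_dim (cube_top n) = n.
Proof.
by rewrite /cube_dim -[RHS](card_ord n); apply: eq_card => i; rewrite !inE ffunE.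
Qed.

Lemma lecube_top_eq n (a : cube n) : lecube (cube_top n) a -> a = cube_top n.
Proof.
move=> /forallP le_top_a; apply/ffunP => i.
by move: (le_top_a i); rewrite /leI !ffunE; case: (a i).
Qed.

Section CubicalPoset.
Context {d : Order.disp_t} {P : finPOrderType d}.
Local Open Scope order_scope.

Lemma cell_dimP (x : P) n : cell_dim x n ->
  exists f : cube n -> P, [/\ injective f, forall a b, lecube a b = (f a <= f b)
                            & forall z, (z <= x) = (z \in codom f)].
Proof.
case/existsP => f /and3P [/injectiveP f_inj /forallP f_mono /forallP f_onto].
exists f; split=> // [a b | z]; last exact/eqP/f_onto.
by have /forallP/(_ b)/eqP := f_mono a.
Qed.

Lemma card_cell (x : P) n : cell_dim x n -> #|[pred z | z <= x]| = 3 ^ n.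
Proof.
case/cell_dimP => f [f_inj _ f_onto].
by rewrite (eq_card f_onto) (card_codom f_inj) card_ffun card_option card_bool card_ord.
Qed.

Hypothesis cub : @cubical_poset d P.

Lemma cell_dimE (x : P) k : cell_dim x k = (#|[pred z | z <= x]| == 3 ^ k).
Proof.
apply/idP/eqP => [|card_x]; first exact: card_cell.
by have [n x_n] := cub x; move: (card_cell x_n); rewrite card_x => /expnI ->.
Qed.

Section CellChart.
Variables (s : P) (n : nat) (f : cube n -> P).
Hypotheses (f_inj : injective f) (f_mono : forall a b, lecube a b = (f a <= f b))
  (f_onto : forall z, (z <= s) = (z \in codom f)).

Lemma chart_le_cell a : f a <= s.
Proof. by rewrite f_onto codom_f. Qed.

Lemma chart_top : s = f (cube_top n).
Proof.
have /codomP [a s_a] : s \in codom f by rewrite -f_onto.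
by rewrite s_a; congr f; apply: lecube_top_eq; rewrite f_mono -s_a chart_le_cell.
Qed.

Lemma card_chart_ideal a : #|[pred z | z <= f a]| = 3 ^ cube_dim a.
Proof.
rewrite -card_lecube -(card_image f_inj); apply: eq_card => z /=.
apply/idP/imageP => [z_le | [b /= b_le ->]]; last by move: b_le; rewrite !inE f_mono.
have /codomP [b z_b] : z \in codom f by rewrite -f_onto (le_trans z_le (chart_le_cell a)).
by exists b; rewrite // inE f_mono -z_b.
Qed.

Lemma chart_cell_dim a k : cell_dim (f a) k = (cube_dim a == k).
Proof. by rewrite cell_dimE card_chart_ideal eqn_exp2l. Qed.

End CellChart.

Lemma card_faces (s : P) n k : cell_dim s n -> (k < n)%N ->
  #|[pred t | (t < s) && cell_dim t k]| = 'C(n, k) * 2 ^ (n - k).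
Proof.
case/cell_dimP => f [f_inj f_mono f_onto] lt_kn.
rewrite -card_cube_dim -(card_image f_inj); apply: eq_card => t /=.
apply/andP/imageP => [[t_lt t_k] | [a /[!inE] a_k ->]].
  have /codomP [a ta] : t \in codom f by rewrite -f_onto ltW.
  by exists a; rewrite // inE -(chart_cell_dim f_inj f_mono f_onto) -ta.
rewrite (chart_cell_dim f_inj f_mono f_onto) a_k.
rewrite lt_def (chart_le_cell f_onto) (chart_top f_mono f_onto) (inj_eq f_inj) andbT.
by split=> //; apply: contraTneq a_k => <-; rewrite cube_dim_top gtn_eqF.
Qed.

Lemma coboundary_true k (s : P) :
  coboundary k (fun=> true) s = odd #|[pred t | (t < s) && cell_dim t k]|.
Proof.
by rewrite /coboundary big_const; elim: #|_| => //= m ->.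
Qed.

Lemma coboundary0_edge (g : P -> bool) (e u v : P) : cell_dim e 1 ->
  cell_dim u 0 -> cell_dim v 0 -> u < e -> v < e -> u != v ->
  coboundary 0 g e = g u (+) g v.
Proof.
move=> e_1 u_0 v_0 u_e v_e u_neq_v.
have vertices_e : [set u; v] =i [pred t | (t < e) && cell_dim t 0].
  apply/subset_cardP; first by rewrite cards2 u_neq_v (card_faces e_1).
  by apply/subsetP => t; rewrite !inE => /orP [] /eqP ->; apply/andP.
rewrite /coboundary (eq_bigl _ _ (fun t => esym (vertices_e t))).
by rewrite big_setU1 ?big_set1 ?inE.
Qed.

End CubicalPoset.

Theorem proposition2p1 (d : Order.disp_t) (P : finPOrderType d) :
  @cubical_complex d P -> @H1_Z2_trivial d P ->
  exists c : P -> bool, bicoloring c.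
Proof.
move=> [cub _] H1.
have [|g dg] := H1 (fun=> true).
  by move=> s s_2; rewrite coboundary_true (card_faces cub s_2).
exists g => e u v e_1 u_0 v_0 u_e v_e u_neq_v.
have := dg e e_1; rewrite (coboundary0_edge cub g e_1 u_0 v_0 u_e v_e u_neq_v).
by case: (g u); case: (g v).
Qed.
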